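(* Let $f\in\mathbb{C}_v(z)$ have degree $d\ge2$. If there exist constants $C>0$ and $\lambda>1$ such that $(f^n)^{\natural}(\zeta)\ge C\lambda^n$ for all $n\in\mathbb{N}$ and all $\zeta\in\mathcal{J}_f$, then $\mathcal{J}_f\subseteq\mathbb{P}^1(\mathbb{C}_v)$, i.e. $\mathcal{J}_f$ contains no points of $\mathbb{H}^1_{\mathrm{Berk}}$.
   Context: $\mathbb{C}_v$ is an algebraically closed field of characteristic zero, complete with respect to a nontrivial non-archimedean absolute value. $\mathbb{P}^1_{\mathrm{Berk}}$ is its Berkovich projective line, $\mathbb{P}^1(\mathbb{C}_v)$ the type I points and $\mathbb{H}^1_{\mathrm{Berk}}$ the others. $\mathcal{J}_f$ is the Berkovich Julia set (complement of the set of points having a neighborhood $V$ with $\bigcup_{n\ge1}f^n(V)$ omitting infinitely many points). $f^{\natural}$ is the spherical derivative $\lim_{\zeta'\to\zeta}\|f(\zeta),f(\zeta')\|/\|\zeta,\zeta'\|$ w.r.t. the spherical kernel $\|\cdot,\cdot\|$ (the unique extension of the chordal metric $\rho(z,w)=|z-w|/(\max\{1,|z|\}\max\{1,|w|\})$ to $\mathbb{P}^1_{\mathrm{Berk}}$ continuous off the non-type-I diagonal and equal to $\limsup\rho(x,y)$ over type I $(x,y)\to(\zeta,\xi)$). *)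

From HB Require Import structures.
From mathcomp Require Import all_boot all_order all_algebra.
From mathcomp Require Import boolp classical_sets functions cardinality reals.
Set Implicit Arguments. Unset Strict Implicit. Unset Printing Implicit Defensive.
Import Order.TTheory GRing.Theory Num.Theory.
Local Open Scope classical_set_scope.
Local Open Scope ring_scope.

Section Berkovich.
Variables (R : realType) (K : closedFieldType) (absv : K -> R).

Record is_Cv_abs : Prop := {
  absv_ge0 : forall x, 0 <= absv x;
  absv_eq0 : forall x, absv x = 0 <-> x = 0;
  absvM : forall x y, absv (x * y) = absv x * absv y;
  absv_ultra : forall x y, absv (x + y) <= Num.max (absv x) (absv y);
  absv_nontriv : exists x, absv x <> 0 /\ absv x <> 1;
  absv_complete : forall u : nat -> K,
    (forall e, 0 < e -> exists N, forall m n, (N <= m)%N -> (N <= n)%N ->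
        absv (u m - u n) < e) ->
    exists l, forall e, 0 < e -> exists N, forall n, (N <= n)%N -> absv (u n - l) < e
}.

(* Points of the Berkovich affine line: multiplicative seminorms on K[T]
   extending absv. Points of P^1_Berk are represented in the carrier
   [option ({poly K} -> R)], [None] being the point infinity. *)
Definition is_mseminorm (s : {poly K} -> R) : Prop :=
  [/\ forall p, 0 <= s p,
      forall p q, s (p * q) = s p * s q,
      forall p q, s (p + q) <= s p + s q &
      forall c, s c%:P = absv c].

Definition berkT := option ({poly K} -> R).

Definition A1 : set ({poly K} -> R) := [set s | is_mseminorm s].

Definition BP : set berkT := fun z => match z with None => True | Some s => A1 s end.

(* Topology on A^1_Berk: weakest topology making s |-> s g continuous for all g;
   subbasic opens { s | a < s g < b }. *)
Definition A1open (U : set ({poly K} -> R)) : Prop :=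
  U `<=` A1 /\
  forall s, U s -> exists l : seq ({poly K} * R * R),
     (forall t, t \in l -> t.1.2 < s t.1.1 < t.2) /\
     (forall s', A1 s' -> (forall t, t \in l -> t.1.2 < s' t.1.1 < t.2) -> U s').

Definition A1compact (Cs : set ({poly K} -> R)) : Prop :=
  Cs `<=` A1 /\
  forall (I : Type) (O : I -> set ({poly K} -> R)),
    (forall i, A1open (O i)) -> Cs `<=` \bigcup_i O i ->
    exists (m : nat) (f : 'I_m -> I), Cs `<=` \bigcup_(k : 'I_m) O (f k).

(* P^1_Berk is the one-point compactification of A^1_Berk. *)
Definition berk_open (W : set berkT) : Prop :=
  W `<=` BP /\ A1open [set s | W (Some s)] /\
  (W None -> A1compact (A1 `\` [set s | W (Some s)])).

Definition berk_nbhd (z : berkT) (V : set berkT) : Prop :=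
  V `<=` BP /\ exists U, [/\ berk_open U, U z & U `<=` V].

(* type I points: P^1(K) embedded in P^1_Berk *)
Definition typeI_pt (x : option K) : berkT :=
  match x with None => None | Some a => Some (fun g : {poly K} => absv g.[a]) end.

Definition is_typeI (z : berkT) : Prop := exists x, z = typeI_pt x.

Definition chordal (x y : option K) : R :=
  match x, y with
  | Some z, Some w => absv (z - w) / (Num.max 1 (absv z) * Num.max 1 (absv w))
  | Some z, None => 1 / Num.max 1 (absv z)
  | None, Some w => 1 / Num.max 1 (absv w)
  | None, None => 0
  end.

(* spherical kernel: limsup of the chordal metric over type I (x,y) -> (z,w) *)
Definition sph_kernel (z w : berkT) : R :=
  inf [set r | exists U V, [/\ berk_open U, U z, berk_open V, V w &
         r = sup [set c | exists x y, [/\ U (typeI_pt x), V (typeI_pt y) &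
                                         c = chordal x y]]]].

(* the rational map f = P/Q and its action on P^1_Berk *)
Definition rat_deg (P Q : {poly K}) : nat := maxn (size P).-1 (size Q).-1.

(* homogenisation: Q^(deg g) * g(P/Q) *)
Definition hom_comp (g P Q : {poly K}) : {poly K} :=
  \sum_(i < size g) g`_i *: (P ^+ i * Q ^+ ((size g).-1 - i)).

Definition value_at_inf (P Q : {poly K}) : option K :=
  if (size Q < size P)%N then None
  else if size P == size Q then Some (lead_coef P / lead_coef Q) else Some 0.

(* [g]_{f(z)} = [g o f]_z ; f(z) = infinity at (type I) poles *)
Definition berk_act (P Q : {poly K}) (z : berkT) : berkT :=
  match z with
  | None => typeI_pt (value_at_inf P Q)
  | Some s => if s Q == 0 then None
              else Some (fun g => s (hom_comp g P Q) / (s Q) ^+ (size g).-1)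
  end.

Definition sph_deriv_is (F : berkT -> berkT) (z : berkT) (L : R) : Prop :=
  forall e, 0 < e -> exists U, [/\ berk_open U, U z &
    forall z', U z' -> z' <> z ->
      `| sph_kernel (F z) (F z') / sph_kernel z z' - L | < e].

Definition fatou (P Q : {poly K}) (z : berkT) : Prop :=
  exists V, berk_nbhd z V /\
    infinite_set (BP `\` \bigcup_(n in [set n : nat | (1 <= n)%N])
                             (iter n (berk_act P Q) @` V)).

Definition julia (P Q : {poly K}) : set berkT :=
  [set z | BP z /\ ~ fatou P Q z].

End Berkovich.

From mathcomp Require Import all_boot all_order all_algebra.
From mathcomp Require Import boolp classical_sets functions cardinality reals.
From mathcomp Require Import ring lra.
Set Implicit Arguments. Unset Strict Implicit. Unset Printing Implicit Defensive.
Import Order.TTheory GRing.Theory Num.Theory.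
Local Open Scope classical_set_scope.
Local Open Scope ring_scope.

(* A point z of the Julia set lying in H^1_Berk is a multiplicative seminorm s
   on K[X] with s (X - a) <> 0 for all a.  The proof shows that at such a point
   the spherical derivative of ANY map is bounded by a constant B(s): in every
   neighbourhood of z there are type I points z' with ||z, z'|| >= del > 0,
   while ||f(z), f(z')|| <= 1, so the difference quotients stay below 1 / del.
   This contradicts (f^n)^#(z) >= C lam ^ n for n large. *)

Section PowerEstimates.
Variable R : realType.

Lemma bernoulli_ineq (h : R) n : 0 <= h -> 1 + n%:R * h <= (1 + h) ^+ n.
Proof.
move=> h0; elim: n => [|n IH]; first by rewrite mul0r addr0 expr0.
rewrite exprS -natr1.
have : (1 + h) * (1 + n%:R * h) <= (1 + h) * (1 + h) ^+ n.
  by rewrite ler_wpM2l //; lra.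
have : 0 <= n%:R * h * h :> R by rewrite !mulr_ge0.
nra.
Qed.

Lemma pow_unbounded (r M : R) : 1 < r -> exists n, M < r ^+ n.
Proof.
move=> r1; have h0 : 0 < r - 1 by lra.
have [n Hn] : exists n : nat, `|M| / (r - 1) < n%:R.
  exists (Num.Def.archi_bound (`|M| / (r - 1))); apply: archi_boundP.
  by rewrite divr_ge0 // ltW.
exists n; have := bernoulli_ineq n (ltW h0).
have : `|M| < n%:R * (r - 1) by rewrite -ltr_pdivrMr.
have : M <= `|M| by exact: ler_norm.
have -> : 1 + (r - 1) = r by ring.
lra.
Qed.

Lemma pow_small (a e : R) : 0 <= a < 1 -> 0 < e -> exists n, a ^+ n < e.
Proof.
move=> /andP[a0 a1] e0; have [->|an0] := eqVneq a 0; first by exists 1%N; rewrite expr1.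
have ap : 0 < a by rewrite lt_def an0.
have [n Hn] : exists n, e^-1 < a^-1 ^+ n by apply: pow_unbounded; rewrite invf_gt1.
exists n; rewrite exprVn in Hn.
by rewrite -(invrK e) -[X in X < _]invrK ltf_pV2 ?posrE ?invr_gt0 ?exprn_gt0.
Qed.

Lemma pow_beats_linear (r : R) : 1 < r -> exists n, n.+1%:R < r ^+ n.
Proof.
move=> r1; have h0 : 0 < r - 1 by lra.
have h2 : 0 < (r - 1) ^+ 2 by rewrite exprn_gt0.
have [n Hn] : exists n : nat, 2 / (r - 1) ^+ 2 < n%:R.
  exists (Num.Def.archi_bound (2 / (r - 1) ^+ 2)); apply: archi_boundP.
  by rewrite divr_ge0 // ltW.
have Hn' : 2 < n%:R * (r - 1) ^+ 2 by rewrite -ltr_pdivrMr.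
exists (n + n)%N; have B := bernoulli_ineq n (ltW h0).
rewrite (_ : 1 + (r - 1) = r) in B; last by ring.
rewrite exprD -addn1 !natrD.
have B0 : 0 <= 1 + n%:R * (r - 1) by rewrite addr_ge0 // mulr_ge0 // ltW.
have : (1 + n%:R * (r - 1)) * (1 + n%:R * (r - 1)) <= r ^+ n * r ^+ n.
  by rewrite ler_pM.
have nn : 0 <= n%:R :> R by [].
rewrite expr2 in Hn'; nra.
Qed.

Lemma pow_1plus_upper (h : R) n : 0 <= h <= 1 -> (1 + h) ^+ n <= 1 + (2 ^+ n - 1) * h.
Proof.
move=> /andP[h0 h1]; elim: n => [|n IH]; first by rewrite !expr0; lra.
rewrite !exprS.
have c1 : 1 <= (2 : R) ^+ n by apply: exprn_ege1; lra.
have : (1 + h) * (1 + h) ^+ n <= (1 + h) * (1 + (2 ^+ n - 1) * h).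
  by rewrite ler_wpM2l //; lra.
set c := (2 : R) ^+ n in c1 *.
have : (c - 1) * h * h <= (c - 1) * h.
  by rewrite -[X in _ <= X]mulr1 ler_wpM2l // mulr_ge0 //; lra.
nra.
Qed.

Lemma pow_1minus_lower (h : R) n : 0 <= h <= 1 -> 1 - n%:R * h <= (1 - h) ^+ n.
Proof.
move=> /andP[h0 h1]; elim: n => [|n IH]; first by rewrite mul0r subr0 expr0.
rewrite exprS -natr1.
have : (1 - h) * (1 - n%:R * h) <= (1 - h) * (1 - h) ^+ n by rewrite ler_wpM2l //; lra.
have : 0 <= n%:R * h * h :> R by rewrite !mulr_ge0.
nra.
Qed.

Lemma pow_near_one (eta : R) N : 0 < eta -> exists eps : R,
  [/\ 0 < eps, eps < 1, (1 + eps) ^+ N <= 1 + eta & 1 - eta <= (1 - eps) ^+ N].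
Proof.
move=> e0; pose c : R := 2 ^+ N + N%:R + 1.
have c1 : 1 <= 2 ^+ N :> R by apply: exprn_ege1; lra.
have cN : 0 <= N%:R :> R by [].
have cp : 0 < c by rewrite /c; lra.
pose m := Num.min eta 1.
have m0 : 0 < m by rewrite /m lt_min e0 ltr01.
have m1 : m <= 1 by rewrite /m ge_min lexx orbT.
have me : m <= eta by rewrite /m ge_min lexx.
have ec : m / c * c = m by rewrite divfK // gt_eqF.
have e0' : 0 < m / c by rewrite divr_gt0.
have e1 : m / c <= 1 / 2.
  rewrite ler_pdivrMr //; have : 2 <= c by rewrite /c; lra.
  nra.
exists (m / c); split => //; first lra.
- apply: (le_trans (pow_1plus_upper N _)); first by apply/andP; split; lra.
  have : (2 ^+ N - 1) * (m / c) <= c * (m / c) by apply: ler_wpM2r; rewrite /c; lra.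
  rewrite [c * _]mulrC ec; lra.
- apply: (le_trans _ (pow_1minus_lower N _)); last by apply/andP; split; lra.
  have : N%:R * (m / c) <= c * (m / c) by apply: ler_wpM2r; rewrite /c; lra.
  rewrite [c * _]mulrC ec; lra.
Qed.

Lemma inv_nat_small (e : R) : 0 < e ->
  exists N : nat, forall n, (N <= n)%N -> n.+1%:R^-1 < e.
Proof.
move=> e0; exists (Num.Def.archi_bound e^-1) => n hn.
have h : e^-1 < n.+1%:R.
  apply: (lt_le_trans (archi_boundP _)); first by rewrite invr_ge0 ltW.
  by rewrite ler_nat (leq_trans hn).
by rewrite -[e]invrK ltf_pV2 ?posrE ?invr_gt0.
Qed.

End PowerEstimates.

Lemma uniform_margin (R : realType) (T : eqType) (v : T -> R)
    (l : seq (T * R * R)) : (forall x, 0 <= v x) ->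
  (forall t, t \in l -> t.1.2 < v t.1.1 < t.2) ->
  exists eta, 0 < eta /\ forall t, t \in l ->
    t.1.2 < (1 - eta) * v t.1.1 /\ (1 + eta) * v t.1.1 < t.2.
Proof.
move=> v0; elim: l => [|t l IH] H; first by exists 1; split => // t; rewrite in_nil.
have [e [e0 he]] : exists e, 0 < e /\ forall t', t' \in l ->
    t'.1.2 < (1 - e) * v t'.1.1 /\ (1 + e) * v t'.1.1 < t'.2.
  by apply: IH => t' ht'; apply: H; rewrite in_cons ht' orbT.
have /andP[a1 a2] := H t (mem_head _ _); have vt0 := v0 t.1.1.
set w := v t.1.1 in a1 a2 vt0.
have wp : 0 < w + 1 by lra.
pose e' := Num.min ((w - t.1.2) / (w + 1)) ((t.2 - w) / (w + 1)).
have e'0 : 0 < e' by rewrite lt_min !divr_gt0 //; lra.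
have m1 : e' * (w + 1) <= w - t.1.2 by rewrite -ler_pdivlMr // ge_min lexx.
have m2 : e' * (w + 1) <= t.2 - w by rewrite -ler_pdivlMr // ge_min lexx orbT.
exists (Num.min e e'); split => [|t']; first by rewrite lt_min e0 e'0.
have le_e : Num.min e e' <= e by rewrite ge_min lexx.
have le_e' : Num.min e e' <= e' by rewrite ge_min lexx orbT.
have mp : 0 < Num.min e e' by rewrite lt_min e0 e'0.
set m := Num.min e e' in le_e le_e' mp *.
rewrite in_cons => /orP[/eqP ->|ht']; first by rewrite -/w; split; nra.
have [h1 h2] := he _ ht'; have := v0 t'.1.1; split; nra.
Qed.

Section AbsoluteValue.
Variables (R : realType) (K : closedFieldType) (absv : K -> R).
Hypothesis Hv : is_Cv_abs absv.

Let absv_ge0 := absv_ge0 Hv.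
Let absvM := absvM Hv.

Lemma absv0 : absv 0 = 0.
Proof. exact/(absv_eq0 Hv). Qed.

Lemma absv_neq0 x : x != 0 -> absv x != 0.
Proof. by apply: contraNneq => /(absv_eq0 Hv) ->. Qed.

Lemma absv1 : absv 1 = 1.
Proof.
have h : absv 1 = absv 1 * absv 1 by rewrite -absvM mulr1.
have := absv_neq0 (oner_neq0 K); move: h (absv_ge0 1); nra.
Qed.

Lemma absvN x : absv (- x) = absv x.
Proof.
have h : absv (-1) * absv (-1) = 1 by rewrite -absvM mulrNN mulr1 absv1.
have h1 : absv (-1) = 1 by move: h (absv_ge0 (-1)); nra.
by rewrite -mulN1r absvM h1 mul1r.
Qed.

Lemma absvV x : absv x^-1 = (absv x)^-1.
Proof.
have [->|x0] := eqVneq x 0; first by rewrite invr0 absv0 invr0.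
apply: (mulfI (absv_neq0 x0)).
by rewrite -absvM mulfV // absv1 divff // absv_neq0.
Qed.

Lemma absvX x n : absv (x ^+ n) = absv x ^+ n.
Proof. by elim: n => [|n IH]; rewrite ?expr0 ?absv1 // !exprS absvM IH. Qed.

Lemma absv_prod (I : Type) (r : seq I) (F : I -> K) :
  absv (\prod_(i <- r) F i) = \prod_(i <- r) absv (F i).
Proof. exact: (big_morph absv absvM absv1). Qed.

Lemma absv_triangle x y : absv (x + y) <= absv x + absv y.
Proof.
apply: (le_trans (absv_ultra Hv x y)).
by rewrite ge_max lerDl lerDr !absv_ge0.
Qed.

Lemma absv_subr_le_max x y : absv (x - y) <= Num.max (absv x) (absv y).
Proof. by have := absv_ultra Hv x (- y); rewrite absvN. Qed.

Lemma absv_natr_le1 n : absv n%:R <= 1.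
Proof.
elim: n => [|n IH]; first by rewrite absv0.
by rewrite -natr1; apply: (le_trans (absv_ultra Hv _ _)); rewrite ge_max IH absv1 lexx.
Qed.

Lemma absv_ultra_eq x y : absv y < absv x -> absv (x + y) = absv x.
Proof.
move=> lt; apply/eqP; rewrite eq_le; apply/andP; split.
  by apply: (le_trans (absv_ultra Hv _ _)); rewrite ge_max lexx (ltW lt).
have := absv_ultra Hv (x + y) (- y); rewrite addrK absvN le_max => /orP[] // h.
by have := lt_le_trans lt h; rewrite ltxx.
Qed.

Lemma absv_in01 : exists p : K, 0 < absv p < 1.
Proof.
have [pi [pi0 pi1]] := absv_nontriv Hv.
have pp : 0 < absv pi by rewrite lt_def absv_ge0 andbT; apply/eqP.
have [lt1|gt1] := ltP (absv pi) 1; first by exists pi; rewrite pp lt1.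
exists pi^-1; rewrite absvV invr_gt0 pp invf_lt1 //.
by rewrite lt_def gt1 andbT; apply/eqP => h; apply: pi1.
Qed.

(* Taking roots, the value group contains values arbitrarily close to 1. *)
Lemma absv_near1 (lam : R) : 0 < lam < 1 -> exists r : K, lam < absv r < 1.
Proof.
move=> /andP[l0 l1]; have [p /andP[p0 p1]] := absv_in01.
have [n hn] := pow_small (introT andP (conj (ltW l0) l1)) p0.
have n0 : (0 < n)%N.
  by rewrite lt0n; apply: contraTneq hn => ->; rewrite expr0 -leNgt ltW.
have [r] : exists r, root ('X^n - p%:P) r.
  by apply/closed_rootP; rewrite size_XnsubC // eqSS -lt0n.
rewrite /root !hornerE subr_eq0 => /eqP rp; exists r.
have rn : absv r ^+ n = absv p by rewrite -absvX rp.
have r0 := absv_ge0 r.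
apply/andP; split; rewrite ltNge; apply/negP => h.
- have : absv r ^+ n <= lam ^+ n by rewrite lerXn2r // nnegrE ltW.
  by rewrite rn => /(lt_le_trans hn); rewrite ltxx.
- have : 1 <= absv r ^+ n by apply: exprn_ege1.
  by rewrite rn => /(lt_le_trans p1); rewrite ltxx.
Qed.

Lemma value_dense (t lam : R) : 0 < t -> 0 < lam < 1 ->
  exists u : K, lam * t < absv u <= t.
Proof.
move=> t0 /[dup] /andP[l0 _] hlam; have [r /andP[lr r1]] := absv_near1 hlam.
set a := absv r in lr r1; have ap : 0 < a by apply: lt_trans lr.
have [j hj] : exists j, t < a^-1 ^+ j by apply: pow_unbounded; rewrite invf_gt1.
have aj : 0 < a ^+ j by rewrite exprn_gt0.
have taj : t * a ^+ j < 1.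
  by move: hj; rewrite exprVn -(ltr_pM2r aj) mulVf // gt_eqF.
have exk : exists k, a ^+ k <= t * a ^+ j.
  have [k hk] := pow_small (introT andP (conj (ltW ap) r1)) (mulr_gt0 t0 aj).
  by exists k; apply: ltW.
case: (ex_minnP exk) => k hk kmin.
have k0 : (0 < k)%N.
  by rewrite lt0n; apply: contraTneq hk => ->; rewrite expr0 -ltNge.
have hk1 : t * a ^+ j < a ^+ k.-1.
  by rewrite ltNge; apply/negP => /kmin; rewrite leqNgt ltn_predL k0.
exists (r ^+ k / r ^+ j); rewrite absvM absvV !absvX -/a.
rewrite ltr_pdivlMr // ler_pdivrMr // hk andbT.
rewrite -(prednK k0) exprS -mulrA.
by apply: ltr_pM; rewrite ?mulr_ge0 ?ltW.
Qed.

End AbsoluteValue.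

Section Seminorm.
Variables (R : realType) (K : closedFieldType) (absv : K -> R).
Hypothesis Hv : is_Cv_abs absv.
Variable s : {poly K} -> R.
Hypothesis Hs : is_mseminorm absv s.

Lemma s_ge0 p : 0 <= s p. Proof. by case: Hs. Qed.
Lemma sM p q : s (p * q) = s p * s q. Proof. by case: Hs. Qed.
Lemma sD p q : s (p + q) <= s p + s q. Proof. by case: Hs. Qed.
Lemma sC c : s c%:P = absv c. Proof. by case: Hs. Qed.

Lemma s1 : s 1 = 1. Proof. by rewrite -polyC1 sC (absv1 Hv). Qed.

Lemma sN p : s (- p) = s p.
Proof. by rewrite -mulN1r -polyC1 -polyCN sM sC (absvN Hv) (absv1 Hv) mul1r. Qed.

Lemma sX p n : s (p ^+ n) = s p ^+ n.
Proof. by elim: n => [|n IH]; rewrite ?expr0 ?s1 // !exprS sM IH. Qed.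

Lemma s_prod (I : Type) (r : seq I) (F : I -> {poly K}) :
  s (\prod_(i <- r) F i) = \prod_(i <- r) s (F i).
Proof. exact: (big_morph s sM s1). Qed.

Lemma s_sum (I : Type) (r : seq I) (F : I -> {poly K}) :
  s (\sum_(i <- r) F i) <= \sum_(i <- r) s (F i).
Proof.
elim: r => [|i r IH]; first by rewrite !big_nil -polyC0 sC (absv0 Hv).
by rewrite !big_cons; apply: (le_trans (sD _ _)); rewrite lerD2l.
Qed.

Lemma s_muln p k : s (p *+ k) <= s p.
Proof.
rewrite -mulr_natl -polyC_natr sM sC -[X in _ <= X]mul1r ler_wpM2r ?s_ge0 //.
exact: (absv_natr_le1 Hv k).
Qed.

(* The binomial expansion bounds s (p + q) ^ n by (n + 1) max(s p, s q) ^ n;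
   since exponentials beat linear functions this forces the ultrametric law. *)
Lemma s_ultra p q : s (p + q) <= Num.max (s p) (s q).
Proof.
set m := Num.max (s p) (s q).
have m0 : 0 <= m by rewrite le_max s_ge0.
have bound n : s (p + q) ^+ n <= n.+1%:R * m ^+ n.
  rewrite -sX exprDn; apply: (le_trans (s_sum _ _)).
  apply: (@le_trans _ _ (\sum_(i < n.+1) m ^+ n)); last first.
    by rewrite sumr_const card_ord mulr_natl.
  apply: ler_sum => i _; apply: (le_trans (s_muln _ _)).
  have -> : m ^+ n = m ^+ (n - i) * m ^+ i by rewrite -exprD subnK // -ltnS.
  rewrite sM !sX.
  by apply: ler_pM; rewrite ?exprn_ge0 ?s_ge0 //; apply: lerXn2r;
    rewrite ?nnegrE ?s_ge0 // /m le_max lexx ?orbT.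
rewrite leNgt; apply/negP => lt.
have [m00|mp] := eqVneq m 0.
  by have := bound 1%N; move: lt; rewrite m00 !expr1 mulr0; lra.
have mpos : 0 < m by rewrite lt_def mp m0.
have [n] : exists n, n.+1%:R < (s (p + q) / m) ^+ n.
  by apply: pow_beats_linear; rewrite ltr_pdivlMr // mul1r.
rewrite expr_div_n ltr_pdivlMr ?exprn_gt0 //.
by move/lt_le_trans/(_ (bound n)); rewrite ltxx.
Qed.

Lemma s_ultra_eq p q : s q < s p -> s (p + q) = s p.
Proof.
move=> lt; apply/eqP; rewrite eq_le; apply/andP; split.
  by apply: (le_trans (s_ultra _ _)); rewrite ge_max lexx (ltW lt).
have := s_ultra (p + q) (- q); rewrite addrK sN le_max => /orP[] // h.
by have := lt_le_trans lt h; rewrite ltxx.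
Qed.

Lemma s_typeI a : s ('X - a%:P) = 0 -> forall g, s g = absv g.[a].
Proof.
move=> h0 g; have : root (g - g.[a]%:P) a by rewrite /root !hornerE subrr.
case/factor_theorem => q hq.
have eg : g = g.[a]%:P + q * ('X - a%:P) by rewrite -hq addrC subrK.
apply/eqP; rewrite eq_le; apply/andP; split.
  by rewrite {1}eg; apply: (le_trans (sD _ _)); rewrite sM h0 mulr0 addr0 sC.
rewrite -sC (_ : g.[a]%:P = g - q * ('X - a%:P)); last by rewrite {2}eg addrK.
by apply: (le_trans (sD _ _)); rewrite sN sM h0 mulr0 addr0.
Qed.

Lemma s_center_shift a b : s ('X - b%:P) <= s ('X - a%:P) + absv (a - b).
Proof.
rewrite (_ : 'X - b%:P = ('X - a%:P) + (a - b)%:P); last by rewrite polyCB; ring.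
by rewrite -sC sD.
Qed.

Lemma absv_centers_le a b : absv (a - b) <= s ('X - a%:P) + s ('X - b%:P).
Proof.
rewrite -sC (_ : (a - b)%:P = ('X - b%:P) + - ('X - a%:P)); last by rewrite polyCB; ring.
by rewrite addrC; apply: (le_trans (sD _ _)); rewrite sN.
Qed.

(* A point which is not of type I keeps a positive distance rho from all
   type I points: otherwise centers with s (X - c) -> 0 form a Cauchy
   sequence whose limit l has s (X - l) = 0, by completeness. *)
Lemma s_center_lb : (forall a, s ('X - a%:P) <> 0) ->
  exists rho, 0 < rho /\ forall c, rho <= s ('X - c%:P).
Proof.
move=> nI; apply: contrapT => noLb.
have small n : exists c, s ('X - c%:P) < n.+1%:R^-1.
  apply: contrapT => H2; apply: noLb.
  exists n.+1%:R^-1; split => [|c]; first by rewrite invr_gt0.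
  by rewrite leNgt; apply/negP => lt; apply: H2; exists c.
have [u hu] := choice small.
have e2 (e : R) : 0 < e -> 0 < e / 2 by move=> e0; rewrite divr_gt0.
have halves (e : R) : e / 2 + e / 2 = e by field.
have [l hl] : exists l, forall e, 0 < e ->
    exists N, forall n, (N <= n)%N -> absv (u n - l) < e.
  apply: (absv_complete Hv) => e /e2 /inv_nat_small[N hN].
  exists N => m n hm hn; apply: (le_lt_trans (absv_centers_le _ _)).
  have := halves e; have := hu m; have := hu n; have := hN m hm; have := hN n hn.
  set a := n.+1%:R^-1; set b := m.+1%:R^-1; set c := e / 2; lra.
apply: (nI l); apply/eqP; rewrite eq_le s_ge0 andbT.
apply/ler_addgt0Pr => e e0; rewrite add0r.
have [N1 hN1] := hl _ (e2 e e0); have [N2 hN2] := inv_nat_small (e2 e e0).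
set n := maxn N1 N2; have := s_center_shift (u n) l.
have := halves e; have := hN1 n (leq_maxl _ _); have := hN2 n (leq_maxr _ _).
have := hu n; set a := n.+1%:R^-1; set c := e / 2; lra.
Qed.

End Seminorm.

(* In a non-archimedean algebraically closed field, a closed disc of radius t
   contains, for any finitely many points B of it, a point x at distance at
   least lam ^ #B * t from all of them: take x a root of
   prod_(a in B) (X - a) - u ^ #B, with |u| just below t. *)
Lemma spread_in_disc (R : realType) (K : closedFieldType) (absv : K -> R)
    (B : seq K) (c : K) (t lam : R) :
  is_Cv_abs absv -> 0 < t -> 0 < lam < 1 ->
  (forall a, a \in B -> absv (c - a) <= t) ->
  exists x, absv (x - c) <= t /\
            forall a, a \in B -> lam ^+ size B * t <= absv (x - a).
Proof.
move=> Hv t0 hlam Bc; have ge0 := absv_ge0 Hv; set m := size B.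
have [m0|mpos] := posnP m.
  exists c; rewrite subrr (absv0 Hv) ltW //; split => // a.
  by move: m0 => /size0nil ->.
have [u /andP[u1 u2]] := value_dense Hv t0 hlam.
pose P := \prod_(a <- B) ('X - a%:P) - (u ^+ m)%:P.
have sP : size P = m.+1.
  rewrite /P size_polyDl size_prod_XsubC // size_opp ltnS.
  exact: leq_trans (size_polyC_leq1 _) mpos.
have [x] : exists x, root P x by apply/closed_rootP; rewrite sP eqSS -lt0n.
rewrite /root /P hornerD hornerN hornerC horner_prod subr_eq0 => /eqP hx.
have Pabs : \prod_(a <- B) absv (x - a) = absv u ^+ m.
  rewrite -(absvX Hv) -hx (absv_prod Hv).
  by apply: eq_bigr => a _; rewrite hornerXsubC.
have u_le_t : absv u ^+ m <= t ^+ m.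
  by apply: lerXn2r => //; rewrite nnegrE ?ge0 ?(ltW t0).
have xc : absv (x - c) <= t.
  rewrite leNgt; apply/negP => lt.
  have : \prod_(a <- B) absv (x - a) = absv (x - c) ^+ m.
    rewrite -[m]count_predT -iter_mulr_1 -big_const_seq.
    apply: eq_big_seq => a aB; rewrite (_ : x - a = (x - c) + (c - a)); last by ring.
    by apply: (absv_ultra_eq Hv); apply: le_lt_trans lt; apply: Bc.
  rewrite Pabs => e; have : t ^+ m < absv (x - c) ^+ m by rewrite ltrXn2r ?(ltW t0) // -lt0n.
  by rewrite -e => /(lt_le_trans) /(_ u_le_t); rewrite ltxx.
exists x; split => // a0 a0B.
have others : \prod_(a <- rem a0 B) absv (x - a) <= t ^+ m.-1.
  rewrite -(size_rem a0B) -count_predT -iter_mulr_1 -big_const_seq.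
  rewrite big_seq [X in _ <= X]big_seq; apply: ler_prod => a /mem_rem aB.
  rewrite ge0 /= (_ : x - a = (x - c) + (c - a)); last by ring.
  by apply: (le_trans (absv_ultra Hv _ _)); rewrite ge_max xc Bc.
have lu : (lam * t) ^+ m <= absv u ^+ m.
  by case/andP: hlam => l0 _; rewrite lerXn2r ?nnegrE ?ge0 ?mulr_ge0 // ltW.
have tm : 0 < t ^+ m.-1 by rewrite exprn_gt0.
rewrite -(ler_pM2r tm); apply: (le_trans _ (le_trans lu _)).
  by rewrite exprMn -mulrA -exprS prednK.
by rewrite -Pabs (big_rem _ a0B) /= ler_wpM2l.
Qed.

Definition roots_of (K : closedFieldType) (g : {poly K}) : seq K :=
  sval (closed_field_poly_normal g).

Lemma roots_ofE (K : closedFieldType) (g : {poly K}) :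
  g = lead_coef g *: \prod_(z <- roots_of g) ('X - z%:P).
Proof. exact: (svalP (closed_field_poly_normal g)). Qed.

Section Density.
Variables (R : realType) (K : closedFieldType) (absv : K -> R).
Hypothesis Hv : is_Cv_abs absv.
Variable s : {poly K} -> R.
Hypothesis Hs : is_mseminorm absv s.
Hypothesis HnI : forall a, s ('X - a%:P) <> 0.

Lemma almost_minimal_center (th : R) : 1 < th -> exists c, 0 < s ('X - c%:P) /\
   forall c', s ('X - c%:P) <= th * s ('X - c'%:P).
Proof.
move=> th1; have [rho [rho0 hrho]] := s_center_lb Hv Hs HnI.
pose S := [set r | exists c, r = s ('X - c%:P)].
have S0 : S !=set0 by exists (s ('X - 0%:P)); exists 0.
have i0 : rho <= inf S by apply: lb_le_inf => // r [c ->].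
have infS0 : 0 < inf S by apply: lt_le_trans i0.
have : inf S < th * inf S by nra.
case/(inf_lt S0) => r [c ->] hc; exists c; split; first exact: lt_le_trans (hrho c).
move=> c'; apply: (le_trans (ltW hc)); rewrite ler_pM2l; last lra.
by apply: ge_inf; [exists rho => r' [c'' ->] | exists c'].
Qed.

(* A single point x sees every center a of a finite family A at distance
   comparable to s (X - a): centers far from an almost minimal center c are
   seen from x exactly as from s, those near c are spread by spread_in_disc. *)
Lemma approx_centers (A : seq K) (lam th : R) : 0 < lam < 1 -> 1 < th ->
  exists x, forall a, a \in A ->
    lam ^+ size A * s ('X - a%:P) <= absv (x - a) <= th * s ('X - a%:P).
Proof.
move=> hlam th1; have [l0 l1] := andP hlam; have ge0 := absv_ge0 Hv.
have [c [t0 hc]] := almost_minimal_center th1; set t := s ('X - c%:P) in t0 hc.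
pose B := [seq a <- A | absv (c - a) <= t].
have [x [xc xB]] : exists x, absv (x - c) <= t /\
    forall a, a \in B -> lam ^+ size B * t <= absv (x - a).
  by apply: spread_in_disc => // a; rewrite mem_filter => /andP[].
have lamAB : lam ^+ size A <= lam ^+ size B.
  by rewrite ler_wiXn2l ?ltW // size_filter count_size.
exists x => a aA; have sa := s_ge0 Hs ('X - a%:P).
have sle : s ('X - a%:P) <= Num.max t (absv (c - a)).
  rewrite (_ : 'X - a%:P = ('X - c%:P) + (c - a)%:P); last by rewrite polyCB; ring.
  by rewrite -(sC Hs) (s_ultra Hv Hs).
have lamA1 : lam ^+ size A <= 1 by rewrite exprn_ile1 // ltW.
have lamA0 : 0 <= lam ^+ size A by rewrite exprn_ge0 // ltW.
case: (leP (absv (c - a)) t) => ca.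
- have st : s ('X - a%:P) <= t by apply: (le_trans sle); rewrite ge_max lexx ca.
  apply/andP; split.
    apply: le_trans (xB a _); last by rewrite mem_filter ca aA.
    by apply: ler_pM; rewrite // ltW.
  apply: (le_trans _ (hc a)); rewrite (_ : x - a = (x - c) + (c - a)); last by ring.
  by apply: (le_trans (absv_ultra Hv _ _)); rewrite ge_max xc ca.
- have e1 : absv (x - a) = absv (c - a).
    rewrite (_ : x - a = (c - a) + (x - c)); last by ring.
    by apply: (absv_ultra_eq Hv); apply: le_lt_trans ca.
  have e2 : s ('X - a%:P) = absv (c - a).
    rewrite (_ : 'X - a%:P = (c - a)%:P + ('X - c%:P)); last by rewrite polyCB; ring.
    by rewrite (s_ultra_eq Hv Hs) (sC Hs) // (sC Hs).
  rewrite e1 e2 -[X in _ <= X <= _]mul1r ler_wpM2r ?ge0 // ler_wpM2r ?ge0 //.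
  exact: ltW.
Qed.

Lemma absv_horner_bounds (g : {poly K}) (x : K) (lo hi : R) : 0 <= lo ->
  (forall z, z \in roots_of g ->
     lo * s ('X - z%:P) <= absv (x - z) <= hi * s ('X - z%:P)) ->
  lo ^+ size (roots_of g) * s g <= absv g.[x] <= hi ^+ size (roots_of g) * s g.
Proof.
move=> lo0 hz; have ge0 := absv_ge0 Hv.
have -> : s g = absv (lead_coef g) * \prod_(z <- roots_of g) s ('X - z%:P).
  by rewrite {1}(roots_ofE g) -mul_polyC (sM Hs) (sC Hs) (s_prod Hv Hs).
have -> : absv g.[x] = absv (lead_coef g) * \prod_(z <- roots_of g) absv (x - z).
  rewrite {1}(roots_ofE g) hornerZ (absvM Hv) horner_prod (absv_prod Hv).
  by congr (_ * _); apply: eq_bigr => z _; rewrite hornerXsubC.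
have prodZ (c : R) (F : K -> R) : \prod_(z <- roots_of g) (c * F z) =
    c ^+ size (roots_of g) * \prod_(z <- roots_of g) F z.
  by rewrite big_split /= big_const_seq count_predT iter_mulr_1.
rewrite !(mulrCA _ (absv _)) -!prodZ !big_seq.
apply/andP; split; apply: ler_wpM2l => //; apply: ler_prod => z /hz /andP[h1 h2].
  by rewrite h1 mulr_ge0 // (s_ge0 Hs).
by rewrite h2 ge0.
Qed.

Lemma typeI_dense (l : seq ({poly K} * R * R)) :
  (forall t, t \in l -> t.1.2 < s t.1.1 < t.2) ->
  exists x, forall t, t \in l -> t.1.2 < absv (t.1.1).[x] < t.2.
Proof.
move=> H; have [eta [eta0 heta]] := uniform_margin (s_ge0 Hs) H.
pose A := flatten [seq roots_of t.1.1 | t <- l]; pose N := size A.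
have [eps [e0 e1 eup edn]] := pow_near_one (N * N)%N eta0.
have hlam : 0 < 1 - eps < 1 by apply/andP; split; lra.
have th1 : 1 < 1 + eps by lra.
have [x hx] := approx_centers A hlam th1.
exists x => t tl; have [ha hb] := heta t tl; set g := t.1.1 in ha hb *.
have sg := s_ge0 Hs g; have [ha' hb'] : 0 <= 1 - eps /\ 1 <= 1 + eps by split; lra.
have gA : {subset roots_of g <= A}.
  by move=> z zg; apply/flattenP; exists (roots_of g) => //; apply: map_f.
have dN : (size (roots_of g) <= N)%N.
  rewrite /N /A; case/splitPr: tl => l1 l2.
  by rewrite map_cat flatten_cat /= !size_cat addnCA leq_addr.
have /andP[lo hi] := @absv_horner_bounds g x _ (1 + eps) (exprn_ge0 N ha')
  (fun z zg => hx z (gA z zg)).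
have dNN : (size (roots_of g) <= N * N)%N.
  by apply: (leq_trans dN); case: (N) => // n; rewrite leq_pmulr.
apply/andP; split.
- apply: (lt_le_trans ha); apply: le_trans lo; rewrite -exprM ler_wpM2r //.
  apply: le_trans edn _; rewrite ler_wiXn2l //; last by rewrite leq_mul2l dN orbT.
  lra.
- apply: le_lt_trans hb; apply: (le_trans hi); rewrite ler_wpM2r //.
  by apply: le_trans eup; rewrite ler_weXn2l.
Qed.

End Density.

Section SphericalKernel.
Variables (R : realType) (K : closedFieldType) (absv : K -> R).
Hypothesis Hv : is_Cv_abs absv.

Lemma typeI_A1 (x : K) : A1 absv (fun g => absv g.[x]).
Proof.
split=> [p|p q|p q|c]; rewrite ?hornerM ?hornerD ?hornerC //.
- exact: (absv_ge0 Hv).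
- exact: (absvM Hv).
- exact: (absv_triangle Hv).
Qed.

Lemma BP_open : berk_open absv (BP absv).
Proof.
split=> //; split; first by split=> // s Ss; exists [::]; split=> // s' _ _.
move=> _; split=> [s []|I O _ _] //; have f : 'I_0 -> I by case.
by exists 0%N, f => s [].
Qed.

Lemma chordal_ge0 x y : 0 <= chordal absv x y.
Proof.
have ge0 := absv_ge0 Hv.
by case: x => [a|]; case: y => [b|] //=; rewrite ?divr_ge0 ?mulr_ge0 ?le_max ?ler01.
Qed.

Lemma chordal_le1 x y : chordal absv x y <= 1.
Proof.
have ge0 := absv_ge0 Hv.
have m1 a : 1 <= Num.max 1 (absv a) by rewrite le_max lexx.
have m0 a : 0 < Num.max 1 (absv a) by apply: lt_le_trans (m1 a).
have ma a : absv a <= Num.max 1 (absv a) by rewrite le_max lexx orbT.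
case: x => [a|]; case: y => [b|] //=; rewrite ?ler_pdivrMr ?mulr_gt0 // mul1r //.
apply: (le_trans (absv_subr_le_max Hv a b)); rewrite ge_max; apply/andP; split.
  by rewrite -[X in X <= _]mulr1; apply: ler_pM; rewrite ?ge0 ?ler01 ?ma ?m1.
by rewrite -[X in X <= _]mul1r; apply: ler_pM; rewrite ?ge0 ?ler01 ?ma ?m1.
Qed.

Lemma chordal_ge_dist (M : R) x y : 1 <= M -> absv x <= M -> absv y <= M ->
  absv (x - y) / (M * M) <= chordal absv (Some x) (Some y).
Proof.
move=> M1 xM yM /=; have m0 a : 0 < Num.max 1 (absv a) by rewrite lt_max ltr01.
have M0 : 0 < M by apply: lt_le_trans M1.
apply: ler_wpM2l; first exact: (absv_ge0 Hv).
rewrite lef_pV2 ?posrE ?mulr_gt0 //.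
by apply: ler_pM; rewrite ?ge_max ?M1 // ltW.
Qed.

Definition chordal_values (U V : set (berkT R K)) : set R :=
  [set c | exists x y,
     [/\ U (typeI_pt absv x), V (typeI_pt absv y) & c = chordal absv x y]].

Lemma sup_chordal_values_ge U V c :
  chordal_values U V c -> c <= sup (chordal_values U V).
Proof.
move=> hc; apply: sup_upper_bound => //; split; first by exists c.
by exists 1 => c' [x [y [_ _ ->]]]; exact: chordal_le1.
Qed.

Lemma sup_chordal_values_bounds U V : 0 <= sup (chordal_values U V) <= 1.
Proof.
have [[c hc]|E0] := pselect (chordal_values U V !=set0).
  apply/andP; split.
    by apply: le_trans (sup_chordal_values_ge hc); case: hc => x [y [_ _ ->]];
      apply: chordal_ge0.
  by apply: ge_sup; [exists c | move=> c' [x [y [_ _ ->]]]; apply: chordal_le1].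
rewrite (_ : chordal_values U V = set0) ?sup0 ?lexx ?ler01 //.
by apply/seteqP; split => // c hc; apply: E0; exists c.
Qed.

Lemma sph_kernel_le1 z w : sph_kernel absv z w <= 1.
Proof.
rewrite /sph_kernel; set S := (X in inf X).
have [[r hr]|S0] := pselect (S !=set0); last first.
  rewrite (_ : S = set0) ?inf0 ?ler01 //.
  by apply/seteqP; split=> // r hr; apply: S0; exists r.
have Sge0 : lbound S 0.
  by move=> r' [U [V [_ _ _ _ ->]]]; case/andP: (sup_chordal_values_bounds U V).
apply: (le_trans (ge_inf _ hr)); first by exists 0.
by case: hr => U [V [_ _ _ _ ->]]; case/andP: (sup_chordal_values_bounds U V).
Qed.

Lemma sph_kernel_ge z w d : BP absv z -> BP absv w ->
  (forall U V, berk_open absv U -> U z -> berk_open absv V -> V w ->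
     exists c, chordal_values U V c /\ d <= c) ->
  d <= sph_kernel absv z w.
Proof.
move=> Bz Bw H; apply: lb_le_inf.
  by exists (sup (chordal_values (BP absv) (BP absv))), (BP absv), (BP absv);
    split=> //; apply: BP_open.
move=> r [U [V [oU hU oV hV ->]]]; have [c [hc dc]] := H U V oU hU oV hV.
exact: le_trans dc (sup_chordal_values_ge hc).
Qed.

End SphericalKernel.

Section NonClassicalPoint.
Variables (R : realType) (K : closedFieldType) (absv : K -> R).
Hypothesis Hv : is_Cv_abs absv.
Variable s : {poly K} -> R.
Hypothesis Hs : A1 absv s.
Hypothesis HnI : forall a, s ('X - a%:P) <> 0.

Lemma typeI_in_open U (l : seq ({poly K} * R * R)) :
  berk_open absv U -> U (Some s) ->
  (forall t, t \in l -> t.1.2 < s t.1.1 < t.2) ->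
  exists x, U (typeI_pt absv (Some x)) /\
            forall t, t \in l -> t.1.2 < absv (t.1.1).[x] < t.2.
Proof.
move=> [_ [[_ hA] _]] Us hl'; have [l0 [hl1 hl2]] := hA s Us.
have [x hx] : exists x, forall t, t \in l0 ++ l -> t.1.2 < absv (t.1.1).[x] < t.2.
  by apply: (typeI_dense Hv Hs HnI) => t; rewrite mem_cat => /orP[/hl1|/hl'].
exists x; split=> [|t tl]; last by apply: hx; rewrite mem_cat tl orbT.
by apply: hl2 => [|t tl]; [apply: typeI_A1 | apply: hx; rewrite mem_cat tl].
Qed.

Let M := s 'X + 1.

Let in_disc : {poly K} * R * R := ('X, -1, M).

Let in_discP x : -1 < absv 'X.[x] < M -> absv x < M.
Proof. by rewrite hornerX => /andP[]. Qed.

Let s_in_disc : -1 < s 'X < M.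
Proof. by have := s_ge0 Hs 'X; rewrite /M => ?; apply/andP; split; lra. Qed.

Let s_in_disc_list t : t \in [:: in_disc] -> t.1.2 < s t.1.1 < t.2.
Proof. by rewrite inE => /eqP ->; apply: s_in_disc. Qed.

Lemma separated_typeI_in_open (rho : R) U :
  (forall c, rho <= s ('X - c%:P)) -> 0 < rho ->
  berk_open absv U -> U (Some s) ->
  exists x1 x2, [/\ U (typeI_pt absv (Some x1)), U (typeI_pt absv (Some x2)),
    absv x1 < M, absv x2 < M & rho / 2 < absv (x2 - x1)].
Proof.
move=> hrho rho0 oU Us.
have [x1 [Ux1 /(_ _ (mem_head _ _)) /in_discP hx1]] := typeI_in_open oU Us s_in_disc_list.
pose far : {poly K} * R * R := ('X - x1%:P, rho / 2, s ('X - x1%:P) + 1).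
have s_far : forall t, t \in [:: in_disc; far] -> t.1.2 < s t.1.1 < t.2.
  move=> t; rewrite !inE => /orP[] /eqP ->; first exact: s_in_disc.
  by have := hrho x1 => ? /=; apply/andP; split; lra.
have [x2 [Ux2 hx2]] := typeI_in_open oU Us s_far.
have /hx2/andP[d12 _] : far \in [:: in_disc; far] by rewrite !inE eqxx orbT.
exists x1, x2; split=> //; first exact: in_discP (hx2 _ (mem_head _ _)).
by move: d12; rewrite /= hornerXsubC.
Qed.

(* The kernel ||s, a|| is bounded below uniformly over the type I points a
   of the disc: each neighbourhood of s contains a type I point of the disc
   at distance > rho / 2 from a, whose chordal distance to a is then large. *)
Lemma sph_kernel_lb_near_typeI : exists del : R, 0 < del /\
  forall a, absv a < M -> del <= sph_kernel absv (Some s) (typeI_pt absv (Some a)).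
Proof.
have [rho [rho0 hrho]] := s_center_lb Hv Hs HnI.
pose M1 := Num.max 1 M; have M11 : 1 <= M1 by rewrite le_max lexx.
have M1p : 0 < M1 * M1 by rewrite mulr_gt0 // (lt_le_trans ltr01).
have inM1 x : absv x < M -> absv x <= M1 by move=> /ltW xM; rewrite le_max xM orbT.
exists ((rho / 2) / (M1 * M1)); split=> [|a aM]; first by rewrite !divr_gt0.
apply: (sph_kernel_ge Hv) => //; first exact: typeI_A1.
move=> U V oU Us _ Va.
have [x1 [x2 [Ux1 Ux2 x1M x2M d12]]] := separated_typeI_in_open hrho rho0 oU Us.
have [x [Ux xM xa]] : exists x,
    [/\ U (typeI_pt absv (Some x)), absv x < M & rho / 2 < absv (x - a)].
  have := absv_subr_le_max Hv (x2 - a) (x1 - a).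
  rewrite opprB addrA subrK le_max => /orP[] /(lt_le_trans d12) ?.
    by exists x2.
  by exists x1.
exists (chordal absv (Some x) (Some a)); split; first by exists (Some x), (Some a).
apply: le_trans (chordal_ge_dist Hv M11 (inM1 _ xM) (inM1 _ aM)).
by rewrite ler_pM2r ?invr_gt0 // ltW.
Qed.

Lemma sph_deriv_bounded : exists B, forall F L,
  sph_deriv_is absv F (Some s) L -> L <= B.
Proof.
have [del [del0 hdel]] := sph_kernel_lb_near_typeI.
exists (del^-1 + 1) => F L /(_ 1 ltr01) [U [oU Us HU]].
have [a [Ua /(_ _ (mem_head _ _)) /in_discP aM]] := typeI_in_open oU Us s_in_disc_list.
have a_ne_s : typeI_pt absv (Some a) <> Some s.
  by case=> sE; have := @HnI a; rewrite -sE /= hornerXsubC subrr (absv0 Hv).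
have /ltr_normlP[close _] := HU _ Ua a_ne_s.
move: close; set num := sph_kernel _ _ _; set den := sph_kernel _ _ _ => close.
have den_lb : del <= den := hdel a aM.
have den0 : 0 < den := lt_le_trans del0 den_lb.
have : num / den <= del^-1.
  apply: (@le_trans _ _ den^-1); last by rewrite lef_pV2 ?posrE.
  rewrite -[X in _ <= X]mul1r; apply: ler_wpM2r; first by rewrite invr_ge0 ltW.
  exact: sph_kernel_le1 Hv _ _.
lra.
Qed.

End NonClassicalPoint.

Lemma nonclassical_point (R : realType) (K : closedFieldType) (absv : K -> R)
    (z : berkT R K) : is_Cv_abs absv -> BP absv z -> ~ is_typeI absv z ->
  exists s, [/\ z = Some s, A1 absv s & forall a, s ('X - a%:P) <> 0].
Proof.
move=> Hv; case: z => [s|] Bs nT; last by case: nT; exists None.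
exists s; split=> // a sa; apply: nT; exists (Some a); congr Some.
by apply/funext => g; rewrite (s_typeI Hv Bs sa).
Qed.

Theorem mainTheorem16 (R : realType) (K : closedFieldType) (absv : K -> R)
    (P Q : {poly K}) (C lam : R) :
  is_Cv_abs absv ->
  [pchar K] =i pred0 ->
  coprimep P Q ->
  (2 <= rat_deg P Q)%N ->
  0 < C -> 1 < lam ->
  (forall (n : nat) (z : berkT R K), (1 <= n)%N -> julia absv P Q z ->
     exists L, sph_deriv_is absv (iter n (berk_act absv P Q)) z L /\
               C * lam ^+ n <= L) ->
  forall z, julia absv P Q z -> is_typeI absv z.
Proof.
move=> Hv _ _ _ C0 lam1 Hder z Jz; apply: contrapT => nT.
have [s [zs Hs HnI]] := nonclassical_point Hv Jz.1 nT; subst z.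
have [B hB] := sph_deriv_bounded Hv Hs HnI.
have [n hn] : exists n, B / C < lam ^+ n by apply: pow_unbounded.
have [L [HL CL]] := Hder n.+1 _ (ltn0Sn n) Jz.
have := hB _ _ HL; rewrite ltr_pdivrMr // in hn.
have : lam ^+ n * C <= C * lam ^+ n.+1.
  by rewrite mulrC ler_wpM2l ?ler_weXn2l // ltW.
lra.
Qed.
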